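(* Let $e\geq 2$, $N=\langle\sigma\rangle$ cyclic of order $2^e$, and let $G$ be a transitive subgroup of $\mathrm{Hol}(N)$ of order $2^{e+1}$ that contains $\varphi_{1+2^{e-1}}$. Then $|C_G(\varphi_{1+2^{e-1}})|=2^e$. Moreover, for any $[\sigma^u,\varphi_{-1}]\in G$ with $u$ odd, we have $|C_G([\sigma^u,\varphi_{-1}])|\leq 2^e$, and this inequality is strict if and only if there exists $[\sigma^v,\varphi_b]\in G$ with $u(b-1)\not\equiv -2v\pmod{2^{e-1}}$.
   Context: For an odd integer $a$, $\varphi_a\in\mathrm{Aut}(N)$ is $\sigma\mapsto\sigma^a$. Elements of $\mathrm{Hol}(N)=N\rtimes\mathrm{Aut}(N)$ are written $[\sigma^u,\varphi_a]$ with $[\sigma^u,\varphi_a][\sigma^v,\varphi_b]=[\sigma^{u+va},\varphi_{ab}]$, and $\varphi_a$ denotes $[1,\varphi_a]$. $\mathrm{Hol}(N)$ acts on $N$ by $[\sigma^u,\varphi_a]\cdot\sigma^v=\sigma^{u+av}$; a subgroup is transitive if it acts transitively on $N$. $C_G(x)$ is the centraliser of $x$ in $G$. *)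

From mathcomp Require Import all_boot all_order all_fingroup all_algebra.
Set Implicit Arguments. Unset Strict Implicit. Unset Printing Implicit Defensive.
Import GRing.Theory Num.Theory.

(* N = <sigma> cyclic of order 2^e is identified with 'I_(2^e) via
   sigma^x <-> x.  Hol(N) acts faithfully on N by
   [sigma^u, phi_a] . sigma^x = sigma^(u + a x), so Hol(N) is realized as the
   group of permutations of 'I_(2^e) of the form x |-> u + a x (mod 2^e), a odd. *)

Definition is_hol (e : nat) (u a : int) (s : {perm 'I_(2 ^ e)}) : Prop :=
  forall x : 'I_(2 ^ e), ((s x : nat)%:Z = modz (u + a * (x : nat)%:Z) (2 ^ e)%N%:Z)%R.

Definition Hol (e : nat) : {set {perm 'I_(2 ^ e)}} :=
  [set s : {perm 'I_(2 ^ e)} | [exists u : 'I_(2 ^ e), exists a : 'I_(2 ^ e),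
     odd a && [forall x : 'I_(2 ^ e), (s x : nat) == (u + a * x) %% 2 ^ e]]].
Arguments is_hol e u a s : clear implicits.
Arguments Hol e : clear implicits.

From mathcomp Require Import all_boot all_order all_fingroup all_algebra.
From mathcomp Require Import ring zify.
Import GRing.Theory Num.Theory.
Set Implicit Arguments. Unset Strict Implicit. Unset Printing Implicit Defensive.
Local Open Scope ring_scope.

(* Write e = k + 1.  An element t = [sigma^v, phi_b] of Hol(N) commutes with
   phi = phi_(1 + 2^k) iff 2^k v = 0 mod 2^e, i.e. iff t(1) = sigma^v with v
   even.  As G is transitive it contains some g with g(1) = sigma, and right
   multiplication by g swaps the two parities, so C_G(phi) has index 2 in G.
   For s = [sigma^u, phi_(-1)] with u odd, conjugation by t = [sigma^v, phi_b]
   gives [sigma^(2v + b u), phi_(-1)]; this is s or s^phi = [sigma^((1+2^k)u),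
   phi_(-1)] exactly when u(b - 1) = -2v mod 2^k.  Since s != s^phi, the class
   of s has at least two elements, and more than two iff some t in G breaks the
   congruence; the orbit-stabiliser formula |C_G(s)| |s^G| = 2^(e+1) concludes. *)

Section Holomorph.

Variable e : nat.

Fact exp2_gt0 : (0 < 2 ^ e)%N. Proof. by rewrite expn_gt0. Qed.

Definition ord_zero : 'I_(2 ^ e) := Ordinal exp2_gt0.

Lemma is_hol_dvd v b (t : {perm 'I_(2 ^ e)}) x :
  is_hol e v b t -> ((2 ^ e)%N%:Z %| (t x : nat)%:Z - (v + b * (x : nat)%:Z))%Z.
Proof. by move=> t_hol; rewrite t_hol -eqz_mod_dvd modz_mod. Qed.

Lemma is_hol_of_dvd v b (t : {perm 'I_(2 ^ e)}) :
  (forall x : 'I_(2 ^ e),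
     ((2 ^ e)%N%:Z %| (t x : nat)%:Z - (v + b * (x : nat)%:Z))%Z) ->
  is_hol e v b t.
Proof.
move=> dvd_t x; have := dvd_t x; rewrite -eqz_mod_dvd => /eqP <-.
by rewrite modz_small // lez_nat ltz_nat /= ltn_ord.
Qed.

Lemma is_hol_eqE v v' b (t t' : {perm 'I_(2 ^ e)}) :
  is_hol e v b t -> is_hol e v' b t' -> (t == t') = ((2 ^ e)%N%:Z %| v - v')%Z.
Proof.
move=> t_hol t'_hol; rewrite -eqz_mod_dvd; apply/eqP/eqP => [tt' | eq_v].
  by have := t_hol ord_zero; rewrite tt' t'_hol /= !mulr0 !addr0.
apply/permP => x; apply/val_inj/eqP; rewrite /= -eqz_nat t_hol t'_hol.
by rewrite -modzDml eq_v modzDml.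
Qed.

Lemma is_hol_mul v b v' b' (t t' : {perm 'I_(2 ^ e)}) :
  is_hol e v b t -> is_hol e v' b' t' -> is_hol e (v' + b' * v) (b' * b) (t * t').
Proof.
move=> t_hol t'_hol; apply: is_hol_of_dvd => x; rewrite permM.
have dvd1 := is_hol_dvd x t_hol; have dvd2 := is_hol_dvd (t x) t'_hol.
set tx := (t x : nat)%:Z in dvd1 dvd2 *; set x' := (x : nat)%:Z in dvd1 *.
have -> : (t' (t x) : nat)%:Z - (v' + b' * v + b' * b * x') =
  ((t' (t x) : nat)%:Z - (v' + b' * tx)) + b' * (tx - (v + b * x')) by ring.
by rewrite rpredD // dvdz_mull.
Qed.

Lemma is_hol_conj v b u (t s : {perm 'I_(2 ^ e)}) :
  is_hol e v b t -> is_hol e u (-1) s -> is_hol e (2 * v + b * u) (-1) (s ^ t)%g.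
Proof.
move=> t_hol s_hol; apply: is_hol_of_dvd => x; rewrite /conjg !permM.
set y := (t^-1)%g x; have ty : t y = x by rewrite /y -permM mulVg perm1.
have dvd1 := is_hol_dvd y t_hol; rewrite ty in dvd1.
have dvd2 := is_hol_dvd y s_hol; have dvd3 := is_hol_dvd (s y) t_hol.
have -> : (t (s y) : nat)%:Z - (2 * v + b * u + -1 * (x : nat)%:Z) =
   ((t (s y) : nat)%:Z - (v + b * (s y : nat)%:Z))
   + b * ((s y : nat)%:Z - (u + -1 * (y : nat)%:Z))
   + ((x : nat)%:Z - (v + b * (y : nat)%:Z)) by ring.
by rewrite rpredD // rpredD // dvdz_mull.
Qed.

Lemma HolP (t : {perm 'I_(2 ^ e)}) :
  t \in Hol e -> exists2 a : nat, odd a & is_hol e (t ord_zero : nat)%:Z a%:Z t.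
Proof.
rewrite inE => /existsP [u /existsP [a /andP [odd_a /forallP t_def]]].
have tu : (t ord_zero : nat) = u.
  by rewrite (eqP (t_def _)) /= muln0 addn0 modn_small.
exists a => // x; rewrite tu (eqP (t_def x)) -modz_nat.
by rewrite PoszD PoszM.
Qed.

Lemma odd_Hol (t : {perm 'I_(2 ^ e)}) x :
  (0 < e)%N -> t \in Hol e -> odd (t x) = odd (t ord_zero) (+) odd x.
Proof.
move=> e_gt0.
rewrite inE => /existsP [u /existsP [a /andP [odd_a /forallP t_def]]].
have even_2e : odd (2 ^ e) = false by rewrite oddX; case: e e_gt0.
by rewrite !(eqP (t_def _)) !odd_mod //= muln0 addn0 oddD oddM odd_a.
Qed.

End Holomorph.

Lemma card_rcoset_swap (gT : finGroupType) (G : {group gT}) (C : {set gT}) g :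
  g \in G -> {in G, forall t, ((t * g)%g \in C) = (t \notin C)} ->
  (#|G :&: C| * 2 = #|G|)%N.
Proof.
move=> gG swap_g.
have GCg : ((G :&: C) :* g)%g = G :\: C.
  apply/setP => y; rewrite mem_rcoset !inE groupMr ?groupV //.
  case yG : (y \in G); rewrite ?andbF // andbT.
  by rewrite -{2}(mulgKV g y) swap_g ?groupMr ?groupV // negbK.
by rewrite muln2 -addnn -{2}(card_rcoset _ g) GCg cardsID.
Qed.

Lemma dvdz_exp2S_mul k (x : int) :
  ((2 ^ k.+1)%N%:Z %| (2 ^ k)%N%:Z * x)%Z = (2 %| x)%Z.
Proof.
by rewrite expnS PoszM [2%:Z * _]mulrC dvdz_mul2l // -lt0n expn_gt0.
Qed.

Lemma dvdz_exp2_split k (u w : int) : (u %% 2)%Z = 1 ->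
  ((2 ^ k)%N%:Z %| w)%Z =
  ((2 ^ k.+1)%N%:Z %| w)%Z || ((2 ^ k.+1)%N%:Z %| w - (2 ^ k)%N%:Z * u)%Z.
Proof.
move=> u_odd; have dvd_k_kS : ((2 ^ k)%N%:Z %| (2 ^ k.+1)%N%:Z)%Z.
  by rewrite dvdzE expnS dvdn_mull.
apply/idP/orP => [/dvdzP [q ->] | [] /(dvdz_trans dvd_k_kS)] //.
  rewrite mulrC -mulrBr !dvdz_exp2S_mul.
  by case: (boolP (2 %| q)%Z) => [|odd_q]; [left | right; lia].
by rewrite -(rpredDr _ (dvdz_mulr u (dvdzz _))) subrK.
Qed.

Section TransitiveSubgroup.

Variables (k : nat) (G : {group {perm 'I_(2 ^ k.+1)}}).
Variable phi : {perm 'I_(2 ^ k.+1)}.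
Hypothesis G_Hol : G \subset Hol k.+1.
Hypothesis phi_hol : is_hol k.+1 0 (1 + (2 ^ k)%N%:Z) phi.

Lemma cent1_phiE t :
  t \in Hol k.+1 -> (t \in 'C[phi])%g = ~~ odd (t (ord_zero _)).
Proof.
case/HolP => a _ t_hol; set t0 := (t (ord_zero _) : nat).
have -> : ~~ odd t0 = (2 %| t0%:Z)%Z by rewrite dvdzE dvdn2.
have t_phi := is_hol_mul t_hol phi_hol; have phi_t := is_hol_mul phi_hol t_hol.
rewrite [_ * a%:Z]mulrC in t_phi.
rewrite -(dvdz_exp2S_mul k).
have -> : (2 ^ k)%N%:Z * t0%:Z =
          0 + (1 + (2 ^ k)%N%:Z) * t0%:Z - (t0%:Z + a%:Z * 0) by ring.
by rewrite -(is_hol_eqE t_phi phi_t); apply/cent1P/eqP.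
Qed.

Lemma card_cent1_phi :
  [transitive G, on [set: 'I_(2 ^ k.+1)] | 'P] -> #|G| = (2 ^ k.+2)%N ->
  #|('C_G[phi])%g| = (2 ^ k.+1)%N.
Proof.
move=> G_trans cardG.
have one_lt : (1 < 2 ^ k.+1)%N by rewrite -{1}(expn0 2) ltn_exp2l.
have [g gG g0] :=
  atransP2 G_trans (in_setT (ord_zero k.+1)) (in_setT (Ordinal one_lt)).
have HolG t : t \in G -> t \in Hol k.+1 := subsetP G_Hol t.
apply/eqP; rewrite -(eqn_pmul2r (isT : (0 < 2)%N)) -expnSr -cardG.
apply/eqP/(card_rcoset_swap gG) => t tG.
rewrite !cent1_phiE ?HolG ?groupM // permM odd_Hol ?HolG //.
by rewrite -[g _]/(aperm _ g) -g0 negbK.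
Qed.

Lemma conj_in_pair u v b (s t : {perm 'I_(2 ^ k.+1)}) :
  (u %% 2)%Z = 1 -> is_hol k.+1 u (-1) s -> is_hol k.+1 v b t ->
  ((s ^ t)%g \in [set s; (s ^ phi)%g]) =
  (u * (b - 1) == - (2 * v) %[mod (2 ^ k)%N%:Z])%Z.
Proof.
move=> u_odd s_hol t_hol.
have s_phi := is_hol_conj phi_hol s_hol; rewrite mulr0 add0r in s_phi.
rewrite !inE (is_hol_eqE (is_hol_conj t_hol s_hol) s_hol).
rewrite (is_hol_eqE (is_hol_conj t_hol s_hol) s_phi) eqz_mod_dvd opprK.
rewrite (dvdz_exp2_split k (u * (b - 1) + 2 * v) u_odd).
have -> : u * (b - 1) + 2 * v = 2 * v + b * u - u by ring.
by have -> : 2 * v + b * u - u - (2 ^ k)%N%:Z * u =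
              2 * v + b * u - (1 + (2 ^ k)%N%:Z) * u by ring.
Qed.

Hypothesis phiG : phi \in G.
Variables (u : int) (s : {perm 'I_(2 ^ k.+1)}).
Hypotheses (u_odd : (u %% 2)%Z = 1) (s_hol : is_hol k.+1 u (-1) s).

Lemma pair_sub_class : [set s; (s ^ phi)%g] \subset (s ^: G)%g.
Proof.
by apply/subsetP => y; rewrite !inE => /orP [] /eqP ->; rewrite ?class_refl ?memJ_class.
Qed.

Lemma card_pair : #|[set s; (s ^ phi)%g]| = 2%N.
Proof.
have s_phi := is_hol_conj phi_hol s_hol; rewrite mulr0 add0r in s_phi.
rewrite cards2 eq_sym (is_hol_eqE s_phi s_hol) mulrDl mul1r addrAC subrr add0r.
rewrite dvdz_exp2S_mul; suff /negbTE -> : ~~ (2 %| u)%Z by [].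
by apply/negP => /dvdz_mod0P; rewrite u_odd.
Qed.

Lemma card_class_gt2P :
  (2 < #|(s ^: G)%g|)%N <->
  exists (v b : int) (t : {perm 'I_(2 ^ k.+1)}),
    [/\ t \in G, is_hol k.+1 v b t &
        ~ (u * (b - 1) = - (2 * v) %[mod (2 ^ k)%N%:Z])%Z].
Proof.
rewrite -[X in (X < _)%N]card_pair (ltn_leqif (subset_leqif_card pair_sub_class)).
split => [/subsetPn [_ /imsetP [t tG ->] not_pair] | [v [b [t [tG t_hol not_cong]]]]].
  have [a _ t_hol] := HolP (subsetP G_Hol t tG).
  rewrite (conj_in_pair u_odd s_hol t_hol) in not_pair.
  exists (t (ord_zero _) : nat)%:Z, a%:Z, t.
  by split=> // /eqP cong; rewrite cong in not_pair.
apply/subsetPn; exists (s ^ t)%g; first exact: memJ_class.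
by rewrite (conj_in_pair u_odd s_hol t_hol); apply/eqP.
Qed.

End TransitiveSubgroup.

Theorem lemma5p9 (e : nat) (G : {group {perm 'I_(2 ^ e)}}) :
  (2 <= e)%N ->
  G \subset Hol e ->
  [transitive G, on [set: 'I_(2 ^ e)] | 'P] ->
  #|G| = (2 ^ e.+1)%N ->
  forall phi : {perm 'I_(2 ^ e)},
    is_hol e 0 (1 + (2 ^ (e - 1))%N%:Z)%R phi -> phi \in G ->
    #|('C_G[phi])%g| = (2 ^ e)%N /\
    (forall (u : int) (s : {perm 'I_(2 ^ e)}),
       modz u 2 = 1%R -> is_hol e u (-1)%R s -> s \in G ->
       (#|('C_G[s])%g| <= 2 ^ e)%N /\
       ((#|('C_G[s])%g| < 2 ^ e)%N <->
        exists (v b : int) (t : {perm 'I_(2 ^ e)}),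
          [/\ t \in G, is_hol e v b t &
              ~ (u * (b - 1) = - (2 * v) %[mod (2 ^ (e - 1))%N%:Z])%Z])).
Proof.
case: e G => [|k] G // _ G_Hol G_trans cardG phi; rewrite subn1 /= => phi_hol phiG.
split=> [|u s u_odd s_hol _]; first exact: card_cent1_phi.
rewrite -(card_class_gt2P G_Hol phi_hol phiG u_odd s_hol).
have class_ge2 := subset_leq_card (pair_sub_class phiG s).
rewrite (card_pair phi_hol u_odd s_hol) in class_ge2.
have := Lagrange (subsetIl G 'C[s]%g).
rewrite index_cent1 cardG [(2 ^ k.+2)%N]expnS.
have : (0 < 2 ^ k.+1)%N by rewrite expn_gt0.
move: class_ge2; set c := #|_|; set a := #|_|.
by split; [|split]; nia.
Qed.
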